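(* Let $\kappa\ge2$ and let $P$ be a tensor in $\mathrm{EE}_\kappa(\psi^+)$ for $\psi^+=((a,b),c)$. Then for all $k\in[\kappa]$ the $\kappa\times\kappa$ matrices $$Q^a_{\cdot\cdot k}=P_{+\cdot\cdot}\operatorname{Cof}(P_{\cdot+\cdot})^TP_{\cdot\cdot k}\quad\text{and}\quad Q^b_{\cdot\cdot k}=P_{\cdot\cdot k}\operatorname{Cof}(P_{+\cdot\cdot})P_{\cdot+\cdot}^T$$ are symmetric.
   Context: A $\kappa$-state site pattern probability tensor on a taxon set $X$, $|X|=n$, is an $n$-way $\kappa\times\cdots\times\kappa$ array with one index per taxon, non-negative entries summing to 1. For $Y\subseteq X$, $P_Y$ is the marginalization to $Y$; $\psi^+|_Y$ the induced rooted subtree; a 2-clade is a pair of leaves that are exactly the leaf descendants of some vertex. $\mathrm{UE}_\kappa(\psi^+)$ is the set of such tensors $P$ such that for every $Y\subseteq X$ and every 2-clade $\{x,y\}$ of $\psi^+|_Y$, $P_Y$ is invariant under exchanging the $x$ and $y$ indices. For an $n$-way tensor $P$ and a $\kappa\times\kappa$ matrix $M$, $P*_kM$ is the tensor whose entry at $(i_1,\dots,i_n)$ is the $i_k$-th entry of the row vector $vM$, where $v$ is the vector obtained from $P$ by fixing the $\ell$-th index to $i_\ell$ for all $\ell\neq k$; and $P*(M_1,\dots,M_n)=(\cdots((P*_1M_1)*_2M_2)\cdots)*_nM_n$. The extended exchangeable model $\mathrm{EE}_\kappa(\psi^+)$ is the set of $\kappa$-state site pattern probability tensors $P$ on $X$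 for which there exist non-singular $\kappa\times\kappa$ Markov matrices $M_1,\dots,M_n$ and a non-negative array $\tilde P\in\mathrm{UE}_\kappa(\psi^+)$ with $P*(M_1,\dots,M_n)=\tilde P$. For a 3-way tensor $P=(p_{ijk})$ with indices ordered $a,b,c$: $P_{+\cdot\cdot}$ is the $\kappa\times\kappa$ matrix with $(j,k)$-entry $\sum_i p_{ijk}$; $P_{\cdot+\cdot}$ has $(i,k)$-entry $\sum_j p_{ijk}$; $P_{\cdot\cdot+}$ has $(i,j)$-entry $\sum_kp_{ijk}$; $P_{\cdot\cdot k}$ is the slice with $(i,j)$-entry $p_{ijk}$. $A^T$ is the transpose and $\operatorname{Cof}(A)$ is the matrix of cofactors of a square matrix $A$ (so $\operatorname{Cof}(A)^T$ is the adjugate of $A$). *)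

From mathcomp Require Import all_boot all_order all_algebra.
Set Implicit Arguments. Unset Strict Implicit. Unset Printing Implicit Defensive.
Import Order.TTheory GRing.Theory Num.Theory.
Local Open Scope ring_scope.

(* A 3-way kappa x kappa x kappa array; indices ordered a, b, c. *)
Definition tensor3 (R : Type) (k : nat) := 'I_k -> 'I_k -> 'I_k -> R.

Section Defs.
Variables (R : realFieldType) (k : nat).

Definition is_sp_tensor (P : tensor3 R k) : Prop :=
  (forall i j l, 0 <= P i j l) /\ \sum_i \sum_j \sum_l P i j l = 1.

Definition markov (M : 'M[R]_k) : Prop :=
  (forall i j, 0 <= M i j) /\ (forall i, \sum_j M i j = 1).

(* P *_t M : entry (i1,i2,i3) is the i_t-th entry of v M, v the fibre. *)
Definition tmul1 (P : tensor3 R k) (M : 'M[R]_k) : tensor3 R k :=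
  fun i j l => \sum_m P m j l * M m i.
Definition tmul2 (P : tensor3 R k) (M : 'M[R]_k) : tensor3 R k :=
  fun i j l => \sum_m P i m l * M m j.
Definition tmul3 (P : tensor3 R k) (M : 'M[R]_k) : tensor3 R k :=
  fun i j l => \sum_m P i j m * M m l.
Definition tmul (P : tensor3 R k) (M1 M2 M3 : 'M[R]_k) : tensor3 R k :=
  tmul3 (tmul2 (tmul1 P M1) M2) M3.

Definition margA (P : tensor3 R k) : 'M[R]_k :=
  \matrix_(j, l) \sum_i P i j l.
Definition margB (P : tensor3 R k) : 'M[R]_k :=
  \matrix_(i, l) \sum_j P i j l.
Definition margC (P : tensor3 R k) : 'M[R]_k :=
  \matrix_(i, j) \sum_l P i j l.
Definition slice3 (P : tensor3 R k) (l : 'I_k) : 'M[R]_k :=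
  \matrix_(i, j) P i j l.

(* Matrix of cofactors (so (Cof A)^T = \adj A). *)
Definition Cof (A : 'M[R]_k) : 'M[R]_k := \matrix_(i, j) cofactor A i j.

(* UE_kappa(((a,b),c)): for every Y subset of {a,b,c} and every 2-clade
   {x,y} of the induced rooted subtree, P_Y is invariant under swapping x,y.
   Y = {a,b,c}: 2-clade {a,b};  Y = {a,b}: {a,b};  Y = {a,c}: {a,c};
   Y = {b,c}: {b,c};  |Y| <= 1: no 2-clades. *)
Definition UE_abc (P : tensor3 R k) : Prop :=
  is_sp_tensor P /\
  (forall i j l, P i j l = P j i l) /\
  (forall i j, margC P i j = margC P j i) /\
  (forall i l, margB P i l = margB P l i) /\
  (forall j l, margA P j l = margA P l j).

Definition EE_abc (P : tensor3 R k) : Prop :=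
  is_sp_tensor P /\
  exists M1 M2 M3 : 'M[R]_k,
    [/\ markov M1, markov M2 & markov M3] /\
    [/\ M1 \in unitmx, M2 \in unitmx & M3 \in unitmx] /\
    exists Pt : tensor3 R k,
      (forall i j l, 0 <= Pt i j l) /\ UE_abc Pt /\
      (forall i j l, tmul P M1 M2 M3 i j l = Pt i j l).

End Defs.

From mathcomp Require Import all_boot all_order all_algebra.
Set Implicit Arguments. Unset Strict Implicit. Unset Printing Implicit Defensive.
Import Order.TTheory GRing.Theory Num.Theory.
Local Open Scope ring_scope.

(* Write A = P_{+..}, B = P_{.+.}, S_l = P_{..l} and let
   Pt = P * (M1, M2, M3) be the exchangeable tensor of the definition of EE.
   1. The c-fibres of Pt are the c-fibres of the "transformed slices"
      U_o = M1^T S_o M2 multiplied by M3; since Pt is symmetric in (a,b) and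
      M3 is invertible, every U_o is symmetric.
   2. The marginals of Pt are Pt_{+..} = M2^T A M3 and Pt_{.+.} = M1^T B M3;
      the (a,b)-symmetry of Pt makes them equal, so M2^T A = M1^T B.
   3. From an intertwining X A = Y B with X invertible one gets
      A adj(B) = det B X^-1 Y.  Hence
        Q^a = det B (M2^-1)^T U_l M2^-1,   Q^b = det A (M1^-1)^T U_l M1^-1,
      and a scaled congruence of a symmetric matrix is symmetric. *)

Lemma scaled_congruence_sym (R : comPzRingType) (n : nat) (c : R) (N U : 'M[R]_n) :
  U^T = U -> (c *: (N^T *m U *m N))^T = c *: (N^T *m U *m N).
Proof. by move=> Usym; rewrite linearZ /= !trmx_mul trmxK Usym mulmxA. Qed.

Lemma mul_adj_intertwined (R : comUnitRingType) (n : nat) (A B X Y : 'M[R]_n) :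
  X \in unitmx -> X *m A = Y *m B -> A *m \adj B = \det B *: (invmx X *m Y).
Proof.
move=> uX XAYB; have -> : A = invmx X *m Y *m B by rewrite -mulmxA -XAYB mulKmx.
by rewrite -[_ *m \adj B]mulmxA mul_mx_adj mul_mx_scalar.
Qed.

Lemma rowsum_stochastic (R : comPzRingType) (n : nat) (X M : 'M[R]_n) i :
  (forall i, \sum_j M i j = 1) -> \sum_j (X *m M) i j = \sum_j X i j.
Proof.
move=> M_stoch; under eq_bigr do rewrite mxE.
rewrite exchange_big; apply: eq_bigr => m _ /=.
by rewrite -mulr_sumr M_stoch mulr1.
Qed.

Lemma colsum_stochastic (R : comPzRingType) (n : nat) (M X : 'M[R]_n) j :
  (forall i, \sum_j M i j = 1) -> \sum_i (M^T *m X) i j = \sum_i X i j.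
Proof.
move=> M_stoch; transitivity (\sum_i (X^T *m M) j i).
  by apply: eq_bigr => i _; rewrite -[M in RHS]trmxK -trmx_mul [RHS]mxE.
by rewrite rowsum_stochastic //; apply: eq_bigr => i _; rewrite mxE.
Qed.

Lemma Cof_adj (R : realFieldType) (k : nat) (A : 'M[R]_k) : Cof A = (\adj A)^T.
Proof. by apply/matrixP => i j; rewrite !mxE. Qed.

Section TransformedTensor.
Variables (R : realFieldType) (k : nat) (P : tensor3 R k) (M1 M2 M3 : 'M[R]_k).

Definition tslice (o : 'I_k) : 'M[R]_k := M1^T *m slice3 P o *m M2.

Lemma tmulE i j l : tmul P M1 M2 M3 i j l = \sum_o tslice o i j * M3 o l.
Proof.
apply: eq_bigr => o _; rewrite !mxE; congr (_ * _).
apply: eq_bigr => m _; rewrite mxE; congr (_ * _).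
by apply: eq_bigr => n _; rewrite !mxE mulrC.
Qed.

Lemma tslice_sym :
  M3 \in unitmx -> (forall i j l, tmul P M1 M2 M3 i j l = tmul P M1 M2 M3 j i l) ->
  forall o, (tslice o)^T = tslice o.
Proof.
move=> uM3 Pt_sym o; apply/matrixP => i j; rewrite mxE.
have fibres : \row_o tslice o j i *m M3 = \row_o tslice o i j *m M3.
  apply/rowP => l; rewrite !mxE; under eq_bigr do rewrite mxE.
  by under [RHS]eq_bigr do rewrite mxE; rewrite -!tmulE Pt_sym.
by have /rowP/(_ o) := can_inj (mulmxK uM3) fibres; rewrite !mxE.
Qed.

Lemma tslice_colsum o j : (forall i, \sum_j M1 i j = 1) ->
  \sum_i tslice o i j = (M2^T *m margA P) j o.
Proof.
move=> M1_stoch; rewrite /tslice -mulmxA (colsum_stochastic _ _ M1_stoch) mxE.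
under eq_bigr do rewrite mxE.
rewrite exchange_big; apply: eq_bigr => m _ /=.
by rewrite -mulr_suml !mxE mulrC; congr (_ * _); apply: eq_bigr => i _; rewrite mxE.
Qed.

Lemma tslice_rowsum o i : (forall i, \sum_j M2 i j = 1) ->
  \sum_j tslice o i j = (M1^T *m margB P) i o.
Proof.
move=> M2_stoch; rewrite /tslice (rowsum_stochastic _ _ M2_stoch) mxE.
under eq_bigr do rewrite mxE.
rewrite exchange_big; apply: eq_bigr => m _ /=.
by rewrite -mulr_sumr [margB _ _ _]mxE; congr (_ * _); apply: eq_bigr => j _; rewrite mxE.
Qed.

Lemma margA_tmul : (forall i, \sum_j M1 i j = 1) ->
  margA (tmul P M1 M2 M3) = M2^T *m margA P *m M3.
Proof.
move=> M1_stoch; apply/matrixP => j l; rewrite [LHS]mxE [RHS]mxE.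
under eq_bigr do rewrite tmulE.
rewrite exchange_big; apply: eq_bigr => o _ /=.
by rewrite -mulr_suml tslice_colsum.
Qed.

Lemma margB_tmul : (forall i, \sum_j M2 i j = 1) ->
  margB (tmul P M1 M2 M3) = M1^T *m margB P *m M3.
Proof.
move=> M2_stoch; apply/matrixP => i l; rewrite [LHS]mxE [RHS]mxE.
under eq_bigr do rewrite tmulE.
rewrite exchange_big; apply: eq_bigr => o _ /=.
by rewrite -mulr_suml tslice_rowsum.
Qed.

End TransformedTensor.

Lemma margA_margB_sym (R : realFieldType) (k : nat) (T : tensor3 R k) :
  (forall i j l, T i j l = T j i l) -> margA T = margB T.
Proof. by move=> Tsym; apply/matrixP => j l; rewrite !mxE; apply: eq_bigr. Qed.

Theorem proposition6p1 (R : realFieldType) (k : nat) (hk : (2 <= k)%N)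
  (P : tensor3 R k) (hP : EE_abc P) :
  forall l : 'I_k,
    let Qa := margA P *m (Cof (margB P))^T *m slice3 P l in
    let Qb := slice3 P l *m Cof (margA P) *m (margB P)^T in
    Qa^T = Qa /\ Qb^T = Qb.
Proof.
case: hP => _ [M1 [M2 [M3 [[[_ M1_st] [_ M2_st] _] [[uM1 uM2 uM3]
  [Pt [_ [[_ [Pt_sym _]] PtE]]]]]]]].
have tmul_sym i j l : tmul P M1 M2 M3 i j l = tmul P M1 M2 M3 j i l.
  by rewrite !PtE Pt_sym.
have U_sym := tslice_sym uM3 tmul_sym.
have intertwine : M2^T *m margA P = M1^T *m margB P.
  apply: (can_inj (mulmxK uM3)).
  by rewrite -(margA_tmul P M2 M3 M1_st) -(margB_tmul P M1 M3 M2_st) margA_margB_sym.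
have uM1t : M1^T \in unitmx by rewrite unitmx_tr.
have uM2t : M2^T \in unitmx by rewrite unitmx_tr.
move=> l Qa Qb; split.
- have -> : Qa = \det (margB P) *: ((invmx M2)^T *m tslice P M1 M2 l *m invmx M2).
    rewrite /Qa Cof_adj trmxK (mul_adj_intertwined uM2t intertwine).
    by rewrite -scalemxAl /tslice !mulmxA mulmxK // trmx_inv.
  exact: scaled_congruence_sym.
- have -> : Qb = \det (margA P) *: ((invmx M1)^T *m tslice P M1 M2 l *m invmx M1).
    rewrite /Qb Cof_adj -mulmxA -trmx_mul.
    rewrite (mul_adj_intertwined uM1t (esym intertwine)) linearZ /= trmx_mul trmxK.
    by rewrite -scalemxAr /tslice !trmx_inv trmxK !mulmxA mulVmx // mul1mx.
  exact: scaled_congruence_sym.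
Qed.
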